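(* Let $n\ge1$ and $c:E_n\to\mathbb{C}$ an admissible edge weighting of $Q_n$. Then there is a unique unital $\ast$-homomorphism $\rho_c: C^\ast(Q_n)\to M_{U_n(c)} = B(\mathbb{C}^{U_n(c)})$ with $\rho_c(p_i) = E_{ii}$ for $i\in U_n(c)$, $\rho_c(p_j) = \big[c(i_1j)\overline{c(i_2j)}\big]_{i_1,i_2\in U_n(c)}$ for $j\in V_n(c)$, and $\rho_c(p_x)=0$ for $x\notin U_n(c)\cup V_n(c)$ (where $c(ij):=0$ if $i,j$ are not adjacent). Moreover, for every $j\in V_n(c)$, $\rho_c(p_j)$ is the projection onto the span of the vector $\psi_j = (c(ij))_{i\in U_n(c)}\in\mathbb{C}^{U_n(c)}$.
   Context: For $n\ge1$, identify integers $0\le i<2^n$ with their $n$-digit binary representations; $i\#k$ is $i$ with its $k$-th digit flipped. The hypercube $Q_n$ has vertex classes $U_n$ (even number of $1$'s) and $V_n$ (odd number of $1$'s), edge set $E_n$ of pairs $ij$ ($i\in U_n$, $j\in V_n$, $j=i\#k$ for some $k<n$); $\mathcal N(x)$ denotes the neighbors of $x$. $C^\ast(Q_n)$ is the universal unital C*-algebra generated by projections $p_x$ ($x\in U_n\cup V_n$) with $\sum_{u\in U_n}p_u=1=\sum_{v\in V_n}p_v$ and $p_up_v=0$ when $u,v$ are non-adjacent. For $c:E_n\to\mathbb{C}$, $Q_n(c) = (U_n(c),V_n(c),E_n(c))$ is the subgraph consisting of the edges with $c(ij)\ne0$ and their endpoints. $c$ is admissible if $\sum_{i\in\mathcal N(j_1)\cap\mathcal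 N(j_2)}c(ij_1)\overline{c(ij_2)}=\delta_{j_1j_2}$ for all $j_1,j_2\in V_n(c)$ and $\sum_{j\in\mathcal N(i_1)\cap\mathcal N(i_2)}c(i_1j)\overline{c(i_2j)}=\delta_{i_1i_2}$ for all $i_1,i_2\in U_n(c)$. $E_{ii}$ are the standard matrix units. *)

From HB Require Import structures.
From mathcomp Require Import all_boot all_order all_algebra.
Set Implicit Arguments. Unset Strict Implicit. Unset Printing Implicit Defensive.
Import Order.TTheory GRing.Theory Num.Theory.
Local Open Scope ring_scope.

Definition vertex (n : nat) := {ffun 'I_n -> bool}.

Definition flip n (x : vertex n) (k : 'I_n) : vertex n :=
  [ffun l => if l == k then ~~ x l else x l].

Definition adj n (x y : vertex n) : bool := [exists k, y == flip x k].

Definition Un n : {set vertex n} := [set x : vertex n | ~~ odd #|[set k | x k]|].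
Definition Vn n : {set vertex n} := [set x : vertex n | odd #|[set k | x k]|].

Definition is_edge n (e : vertex n * vertex n) : bool :=
  [&& e.1 \in Un n, e.2 \in Vn n & adj e.1 e.2].
Definition edge n := {e : vertex n * vertex n | is_edge e}.

Definition nbhd n (x : vertex n) : {set vertex n} := [set y | adj x y].

Section Weights.
Variables (C : numClosedFieldType) (n : nat) (c : edge n -> C).

(* c(ij), extended by 0 on non-edges *)
Definition cw (i j : vertex n) : C :=
  match insub (i, j) : option (edge n) with Some e => c e | None => 0 end.

Definition Uc : {set vertex n} := [set i in Un n | [exists j, cw i j != 0]].
Definition Vc : {set vertex n} := [set j in Vn n | [exists i, cw i j != 0]].

Definition admissible : Prop :=
  (forall j1 j2, j1 \in Vc -> j2 \in Vc ->
     \sum_(i in nbhd j1 :&: nbhd j2) cw i j1 * (cw i j2)^* = (j1 == j2)%:R) /\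
  (forall i1 i2, i1 \in Uc -> i2 \in Uc ->
     \sum_(j in nbhd i1 :&: nbhd i2) cw i1 j * (cw i2 j)^* = (i1 == i2)%:R).

(* enumeration of U_n(c), indexing the matrix algebra M_{U_n(c)} *)
Definition mU := #|Uc|.
Definition idx (a : 'I_mU) : vertex n := enum_val a.

Definition Eii (i : vertex n) : 'M[C]_mU :=
  \matrix_(a, b) ((idx a == i) && (idx b == i))%:R.

Definition Pj (j : vertex n) : 'M[C]_mU :=
  \matrix_(a, b) (cw (idx a) j * (cw (idx b) j)^*).

Definition psi (j : vertex n) : 'cV[C]_mU := \col_a cw (idx a) j.

End Weights.

Definition adjmx (C : numClosedFieldType) m (M : 'M[C]_m) : 'M[C]_m :=
  (map_mx Num.conj M)^T.

Definition proj_onto_span (C : numClosedFieldType) m (P : 'M[C]_m) (v : 'cV[C]_m) : Prop :=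
  P *m P = P /\ adjmx P = P /\ (P^T == v^T)%MS.

Definition star_axioms (C : numClosedFieldType) (A : lalgType C) (star : A -> A) : Prop :=
  [/\ forall x, star (star x) = x,
      forall x y, star (x + y) = star x + star y,
      forall (a : C) x, star (a *: x) = a^* *: star x
    & forall x y, star (x * y) = star y * star x].

Definition unital_star_hom (C : numClosedFieldType) (A : lalgType C) (star : A -> A)
  m (phi : A -> 'M[C]_m) : Prop :=
  [/\ forall x y, phi (x + y) = phi x + phi y,
      forall (a : C) x, phi (a *: x) = a *: phi x,
      forall x y, phi (x * y) = phi x *m phi y,
      phi 1 = 1%:M
    & forall x, phi (star x) = adjmx (phi x)].

Definition Qn_relations (C : numClosedFieldType) n (A : lalgType C) (star : A -> A)
  (p : vertex n -> A) : Prop :=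
  [/\ forall x, p x * p x = p x /\ star (p x) = p x,
      \sum_(u in Un n) p u = 1,
      \sum_(v in Vn n) p v = 1
    & forall u v, u \in Un n -> v \in Vn n -> ~~ adj u v -> p u * p v = 0].

(* Universal property of (A, star, p) as C*(Q_n), tested against the
   matrix C*-algebras M_m(C) (the only targets occurring in the statement). *)
Definition Qn_universal (C : numClosedFieldType) n (A : lalgType C) (star : A -> A)
  (p : vertex n -> A) : Prop :=
  forall m (P : vertex n -> 'M[C]_m),
    [/\ forall x, P x *m P x = P x /\ adjmx (P x) = P x,
        \sum_(u in Un n) P u = 1%:M,
        \sum_(v in Vn n) P v = 1%:M
      & forall u v, u \in Un n -> v \in Vn n -> ~~ adj u v -> P u *m P v = 0] ->
    exists! phi : A -> 'M[C]_m,
      unital_star_hom star phi /\ forall x, phi (p x) = P x.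

From HB Require Import structures.
From mathcomp Require Import all_boot all_order all_algebra.
Set Implicit Arguments. Unset Strict Implicit. Unset Printing Implicit Defensive.
Import Order.TTheory GRing.Theory Num.Theory.
Local Open Scope ring_scope.

(* Send p_i to E_ii for i in U_n(c), p_j to the rank-one matrix
   psi_j psi_j^* for j in V_n(c), and every other p_x to 0.  The diagonal
   case j1 = j2 of the first admissibility condition says that psi_j is a
   unit vector, so psi_j psi_j^* is the projection onto its span; the second
   condition says that these projections sum to the identity; and
   E_uu psi_v psi_v^* = 0 for non-adjacent u, v because c(uv) = 0 there.
   The universal property of C*(Q_n) then yields existence and uniqueness of
   rho_c; no other hypothesis on (A, star, p) is needed. *)

Definition is_projection (C : numClosedFieldType) m (P : 'M[C]_m) : Prop :=
  P *m P = P /\ adjmx P = P.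

Lemma projection0 (C : numClosedFieldType) m : is_projection (0 : 'M[C]_m).
Proof.
by split; [rewrite mul0mx | apply/matrixP => a b; rewrite !mxE conjC0].
Qed.

Lemma projection_delta_mx (C : numClosedFieldType) m (a : 'I_m) :
  is_projection (delta_mx a a : 'M[C]_m).
Proof.
split; first by rewrite mul_delta_mx.
by apply/matrixP => i j; rewrite !mxE conjC_nat andbC.
Qed.

Lemma rank_one_proj_onto_span (C : numClosedFieldType) m (v : 'cV[C]_m) :
  v^T *m map_mx Num.conj v = 1%:M ->
  proj_onto_span (v *m (map_mx Num.conj v)^T) v.
Proof.
set w := map_mx Num.conj v => vTw.
have wTv : w^T *m v = 1%:M by rewrite -[LHS]trmxK trmx_mul trmxK vTw trmx1.
split; first by rewrite mulmxA -(mulmxA v) wTv mulmx1.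
split.
  by apply/matrixP => a b; rewrite !mxE !big_ord1 !mxE rmorphM /= conjCK mulrC.
rewrite trmx_mul trmxK; apply/andP; split; first exact: submxMl.
by rewrite -{1}[v^T]mul1mx -vTw -mulmxA submxMl.
Qed.

Section Hypercube.
Variable n : nat.

Lemma flipK (x : vertex n) k : flip (flip x k) k = x.
Proof.
by apply/ffunP => l; rewrite !ffunE; case: eqP => // ->; rewrite negbK.
Qed.

Lemma adj_sym : symmetric (@adj n).
Proof.
suff adjW (x y : vertex n) : adj x y -> adj y x.
  by move=> x y; apply/idP/idP; apply: adjW.
by case/existsP => k /eqP ->; apply/existsP; exists k; rewrite flipK.
Qed.

Lemma Un_notVn (x : vertex n) : x \in Un n -> x \notin Vn n.
Proof. by rewrite !inE. Qed.

End Hypercube.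

Section Weights.
Variables (C : numClosedFieldType) (n : nat) (c : edge n -> C).

Lemma cw_neq0_edge {i j} : cw c i j != 0 -> is_edge (i, j).
Proof. by rewrite /cw; case: insubP => // _; rewrite eqxx. Qed.

Lemma cw_neq0_Uc {i j} : cw c i j != 0 -> i \in Uc c.
Proof.
move=> cij; case/and3P: (cw_neq0_edge cij) => /= iU _ _.
by rewrite inE iU; apply/existsP; exists j.
Qed.

Lemma cw_neq0_Vc {i j} : cw c i j != 0 -> j \in Vc c.
Proof.
move=> cij; case/and3P: (cw_neq0_edge cij) => /= _ jV _.
by rewrite inE jV; apply/existsP; exists i.
Qed.

Lemma cw_neq0_adj {i j} : cw c i j != 0 -> adj i j.
Proof. by case/cw_neq0_edge/and3P. Qed.

Lemma cw_nonadj i j : ~~ adj i j -> cw c i j = 0.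
Proof. by apply: contraNeq => /cw_neq0_adj. Qed.

Lemma Uc_subset_Un : Uc c \subset Un n.
Proof. by apply/subsetP => x; rewrite inE => /andP[]. Qed.

Lemma Vc_subset_Vn : Vc c \subset Vn n.
Proof. by apply/subsetP => x; rewrite inE => /andP[]. Qed.

Lemma Vc_notUc x : x \in Vc c -> x \notin Uc c.
Proof.
move/(subsetP Vc_subset_Vn); apply: contraL.
by move/(subsetP Uc_subset_Un)/Un_notVn.
Qed.

Lemma idx_Uc (a : 'I_(mU c)) : idx a \in Uc c.
Proof. exact: enum_valP. Qed.

Lemma idx_eq (a b : 'I_(mU c)) : (idx a == idx b) = (a == b).
Proof. exact: (inj_eq enum_val_inj). Qed.

Lemma Uc_idx x : x \in Uc c -> exists a : 'I_(mU c), x = idx a.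
Proof.
by move=> xU; exists (enum_rank_in xU x); rewrite /idx enum_rankK_in.
Qed.

Lemma Eii_idx a : Eii c (idx a) = delta_mx a a.
Proof. by apply/matrixP => i j; rewrite !mxE !idx_eq. Qed.

Lemma sum_Eii : \sum_(i in Uc c) Eii c i = 1%:M.
Proof.
rewrite (big_enum_val (Eii c)) /= mx1_sum_delta.
by apply: eq_bigr => a _; rewrite Eii_idx.
Qed.

Lemma sum_nbhdV j1 j2 :
  \sum_(i in nbhd j1 :&: nbhd j2) cw c i j1 * (cw c i j2)^*
  = \sum_(a < mU c) cw c (idx a) j1 * (cw c (idx a) j2)^*.
Proof.
rewrite -(big_enum_val (fun i => cw c i j1 * (cw c i j2)^*)) /=.
rewrite [LHS]big_rmcond => [|i]; last first.
  apply: contraNeq; rewrite mulf_eq0 conjC_eq0 negb_or => /andP[c1 c2].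
  by rewrite !inE ![adj _ i]adj_sym (cw_neq0_adj c1) (cw_neq0_adj c2).
rewrite [RHS]big_rmcond // => i.
by apply: contraNeq; rewrite mulf_eq0 negb_or => /andP[/cw_neq0_Uc].
Qed.

Lemma sum_nbhdU i1 i2 :
  \sum_(j in nbhd i1 :&: nbhd i2) cw c i1 j * (cw c i2 j)^*
  = \sum_(j in Vc c) cw c i1 j * (cw c i2 j)^*.
Proof.
rewrite [LHS]big_rmcond => [|j]; last first.
  apply: contraNeq; rewrite mulf_eq0 conjC_eq0 negb_or => /andP[c1 c2].
  by rewrite !inE (cw_neq0_adj c1) (cw_neq0_adj c2).
rewrite [RHS]big_rmcond // => j.
by apply: contraNeq; rewrite mulf_eq0 negb_or => /andP[/cw_neq0_Vc].
Qed.

Lemma Pj_rank_one j : Pj c j = psi c j *m (map_mx Num.conj (psi c j))^T.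
Proof. by apply/matrixP => a b; rewrite !mxE big_ord1 !mxE. Qed.

Definition rho_vertex x : 'M[C]_(mU c) :=
  if x \in Uc c then Eii c x else if x \in Vc c then Pj c x else 0.

Lemma rho_vertex_Un x : x \in Un n ->
  rho_vertex x = if x \in Uc c then Eii c x else 0.
Proof.
move=> xU; rewrite /rho_vertex; case: ifP => // _.
by rewrite (negbTE (contraNN (subsetP Vc_subset_Vn x) (Un_notVn xU))).
Qed.

Lemma rho_vertex_Vn x : x \in Vn n ->
  rho_vertex x = if x \in Vc c then Pj c x else 0.
Proof.
move=> xV; rewrite /rho_vertex; case: ifP => // xU.
by move: xV; rewrite (negbTE (Un_notVn (subsetP Uc_subset_Un x xU))).
Qed.

Lemma eq_rho_vertex (f : vertex n -> 'M[C]_(mU c)) :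
  f =1 rho_vertex <->
  [/\ forall i, i \in Uc c -> f i = Eii c i,
      forall j, j \in Vc c -> f j = Pj c j
    & forall x, x \notin Uc c :|: Vc c -> f x = 0].
Proof.
rewrite /rho_vertex; split=> [fE | [fU fV f0] x].
  split=> x; rewrite fE; first by move->.
    by move=> xV; rewrite (negbTE (Vc_notUc xV)) xV.
  by rewrite inE negb_or => /andP[/negbTE-> /negbTE->].
case: ifPn => [/fU // | xU]; case: ifPn => [/fV // | xV].
by rewrite f0 // inE negb_or xU xV.
Qed.

Hypothesis hc : admissible c.

Lemma psi_unit j : j \in Vc c ->
  (psi c j)^T *m map_mx Num.conj (psi c j) = 1%:M.
Proof.
move=> jV; apply/matrixP => a b; rewrite !ord1 !mxE eqxx.
have := hc.1 j j jV jV; rewrite eqxx sum_nbhdV => <-.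
by apply: eq_bigr => i _; rewrite !mxE.
Qed.

Lemma Pj_proj_onto_span j : j \in Vc c -> proj_onto_span (Pj c j) (psi c j).
Proof.
by move=> jV; rewrite Pj_rank_one; apply/rank_one_proj_onto_span/psi_unit.
Qed.

Lemma sum_Pj : \sum_(j in Vc c) Pj c j = 1%:M.
Proof.
apply/matrixP => a b; rewrite summxE mxE -idx_eq -hc.2 ?idx_Uc // sum_nbhdU.
by apply: eq_bigr => j _; rewrite mxE.
Qed.

Lemma rho_vertex_projection x : is_projection (rho_vertex x).
Proof.
rewrite /rho_vertex; case: ifPn => [/Uc_idx[a ->] | _].
  by rewrite Eii_idx; apply: projection_delta_mx.
case: ifPn => [jV | _]; last exact: projection0.
by case: (Pj_proj_onto_span jV) => ? [].
Qed.

Lemma sum_Un_rho_vertex : \sum_(u in Un n) rho_vertex u = 1%:M.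
Proof.
rewrite (eq_bigr _ rho_vertex_Un) -big_mkcondr -sum_Eii.
by apply: eq_bigl => x; rewrite andb_idl // => /(subsetP Uc_subset_Un).
Qed.

Lemma sum_Vn_rho_vertex : \sum_(v in Vn n) rho_vertex v = 1%:M.
Proof.
rewrite (eq_bigr _ rho_vertex_Vn) -big_mkcondr -sum_Pj.
by apply: eq_bigl => x; rewrite andb_idl // => /(subsetP Vc_subset_Vn).
Qed.

Lemma rho_vertex_nonadj u v : u \in Un n -> v \in Vn n -> ~~ adj u v ->
  rho_vertex u *m rho_vertex v = 0.
Proof.
move=> uU vV nuv; rewrite rho_vertex_Un // rho_vertex_Vn //.
case: ifP => _; last by rewrite mul0mx.
case: ifP => _; last by rewrite mulmx0.
apply/matrixP => a b; rewrite !mxE big1 // => k _; rewrite !mxE.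
rewrite andbC; case: eqP => [->|_]; last by rewrite mul0r.
by rewrite cw_nonadj // mul0r mulr0.
Qed.

Lemma rho_vertex_relations :
  [/\ forall x, rho_vertex x *m rho_vertex x = rho_vertex x /\
                adjmx (rho_vertex x) = rho_vertex x,
      \sum_(u in Un n) rho_vertex u = 1%:M,
      \sum_(v in Vn n) rho_vertex v = 1%:M
    & forall u v, u \in Un n -> v \in Vn n -> ~~ adj u v ->
        rho_vertex u *m rho_vertex v = 0].
Proof.
split; [exact: rho_vertex_projection | exact: sum_Un_rho_vertex |
        exact: sum_Vn_rho_vertex | exact: rho_vertex_nonadj].
Qed.

End Weights.

Theorem proposition4p4 (C : numClosedFieldType) (n : nat) (hn : (0 < n)%N)
  (A : lalgType C) (star : A -> A) (p : vertex n -> A)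
  (hstar : star_axioms star) (hrel : Qn_relations star p)
  (huniv : Qn_universal star p)
  (c : edge n -> C) (hc : admissible c) :
  (exists! rho : A -> 'M[C]_(mU c),
     [/\ unital_star_hom star rho,
         forall i, i \in Uc c -> rho (p i) = Eii c i,
         forall j, j \in Vc c -> rho (p j) = Pj c j
       & forall x, x \notin Uc c :|: Vc c -> rho (p x) = 0]) /\
  (forall j, j \in Vc c -> proj_onto_span (Pj c j) (psi c j)).
Proof.
split; last exact: Pj_proj_onto_span.
have [rho [[rho_hom rho_p] rho_uniq]] := huniv _ _ (rho_vertex_relations hc).
exists rho; split.
  by case/eq_rho_vertex: rho_p => rhoU rhoV rho0; split.
move=> sigma [sigma_hom sigmaU sigmaV sigma0]; apply: rho_uniq; split=> //.
exact/eq_rho_vertex.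
Qed.
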